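(* Let $(S,\mathcal C)$ be a connectoid that has a normal spanning tree $T$. Then there is a bijection between the ends of $(S,\mathcal C)$ and the ends of the (graph-theoretic) tree $T$.
   Context: A connectoid is given by a set $S$ and a set $\mathcal F$ of finite subsets of $S$ such that (i) $F\cup F'\in\mathcal F$ whenever $F,F'\in\mathcal F$ and $F\cap F'\neq\emptyset$, and (ii) $\emptyset\in\mathcal F$ and $\{s\}\in\mathcal F$ for every $s\in S$. A set $C\subseteq S$ is connected if for all $x,y\in C$ there is $F\in\mathcal F$ with $F\subseteq C$ and $x,y\in F$; $\mathcal C$ is the set of connected sets and $(S,\mathcal C)$ is the connectoid. For $S'\subseteq S$, a component of $S'$ is a maximal connected subset of $S'$, and $\mathcal K(S')$ is the set of components of $S'$. ''Almost all'' means all but finitely many. A necklace is a connected set $N$ for which there is a family $(H_n)_{n\in\mathbb N}$ of finite connected sets with $N=\bigcup_n H_n$ and $H_i\cap H_j\neq\emptyset$ iff $|i-j|\le 1$. For a necklace $N$ and finite $X\subseteq S$, the $X$-tail of $N$ is the unique element of $\mathcal K(N\setminus X)$ containing almost all elements of $N$. Two necklaces are equivalent if for every finite $X\subseteq S$ their $X$-tails lie in the same element of $\mathcal K(S\setminus X)$. An end of $(S,\mathcal C)$ is an equivalence class of necklaces. Ends of the tree $T$ are the usual graph-theoretic ends (equivalence classes of rays). For a rooted tree $T$ with tree order $\le_T$ (root is the minimum) and $t\in V(T)$, let $\mathrm{Down}_T(t)=\{x\in V(T):x\le_T t\}$ and $\mathrm{Down}^\circ_T(t)=\mathrm{Down}_T(t)\setminus\{t\}$.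 A weak normal tree of $(S,\mathcal C)$ is a rooted undirected tree $T$ with $V(T)\subseteq S$ such that (1) for every $C\in\mathcal C$ and every two $\le_T$-incomparable $u,v\in C\cap V(T)$ there is $w\in C$ with $w\le_T u$ and $w\le_T v$, and (2) for all $u\le_T v$ in $V(T)$ there is $C\in\mathcal C$ containing $u$ and $v$ with $C\cap\mathrm{Down}^\circ_T(u)=\emptyset$. It is a normal tree if additionally for every rooted ray $R$ of $T$ (ray starting at the root) there is a necklace containing almost all vertices of $R$. It is spanning if $V(T)=S$. *)

(* Subsets of a type S are predicates S -> Prop;
   all set equalities are taken extensionally. *)
From Stdlib Require Import List Arith Lia.
Import ListNotations.

Set Implicit Arguments.

Section Defs.
Variable S : Type.

Definition finite_set (A : S -> Prop) : Prop :=
  exists l : list S, forall x, A x -> In x l.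

Definition subset (A B : S -> Prop) : Prop := forall x, A x -> B x.

Definition is_connectoid (fam : (S -> Prop) -> Prop) : Prop :=
  (forall F, fam F -> finite_set F) /\
  (forall F F', fam F -> fam F' -> (exists x, F x /\ F' x) ->
     exists G, fam G /\ forall x, G x <-> (F x \/ F' x)) /\
  (exists E, fam E /\ forall x, ~ E x) /\
  (forall s, exists G, fam G /\ forall x, G x <-> x = s).

Variable fam : (S -> Prop) -> Prop.

Definition connected (C : S -> Prop) : Prop :=
  forall x y, C x -> C y ->
    exists F, fam F /\ subset F C /\ F x /\ F y.

Definition component (A K : S -> Prop) : Prop :=
  connected K /\ subset K A /\
  forall K', connected K' -> subset K K' -> subset K' A -> subset K' K.

Definition necklace (N : S -> Prop) : Prop :=
  connected N /\
  exists H : nat -> (S -> Prop),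
    (forall n, finite_set (H n) /\ connected (H n)) /\
    (forall x, N x <-> exists n, H n x) /\
    (forall i j, (exists x, H i x /\ H j x) <-> (i <= j + 1 /\ j <= i + 1)).

Definition is_tail (N X K : S -> Prop) : Prop :=
  component (fun x => N x /\ ~ X x) K /\
  finite_set (fun x => N x /\ ~ K x).

Definition necklace_equiv (N N' : S -> Prop) : Prop :=
  forall X, finite_set X ->
  forall K K', is_tail N X K -> is_tail N' X K' ->
    exists D, component (fun x => ~ X x) D /\ subset K D /\ subset K' D.

Variable V : S -> Prop.
Variable E : S -> S -> Prop.

Fixpoint chain (R : S -> S -> Prop) (l : list S) : Prop :=
  match l with
  | x :: ((y :: _) as t) => R x y /\ chain R t
  | _ => True
  end.

Definition gpath (W : S -> Prop) (l : list S) : Prop :=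
  Forall W l /\ NoDup l /\ chain E l.

Definition path_from_to (W : S -> Prop) (x y : S) (l : list S) : Prop :=
  gpath W l /\ hd_error l = Some x /\ hd_error (rev l) = Some y.

Definition is_simple_graph : Prop :=
  (forall x y, E x y -> V x /\ V y) /\
  (forall x y, E x y -> E y x) /\
  (forall x, ~ E x x).

Definition graph_connected : Prop :=
  forall x y, V x -> V y -> exists l, path_from_to V x y l.

Definition has_cycle : Prop :=
  exists x t, gpath V (x :: t) /\ 2 <= length t /\ E (last t x) x.

Definition is_tree : Prop :=
  is_simple_graph /\ graph_connected /\ ~ has_cycle.

Variable r : S.

Definition rooted_tree : Prop := is_tree /\ V r.

Definition tle (x y : S) : Prop :=
  exists l, path_from_to V r y l /\ In x l.

Definition ray (f : nat -> S) : Prop :=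
  (forall m n, f m = f n -> m = n) /\
  (forall n, V (f n)) /\
  (forall n, E (f n) (f (Datatypes.S n))).

Definition ray_equiv (f g : nat -> S) : Prop :=
  forall X, finite_set X ->
    exists i j,
      (forall k, i <= k -> ~ X (f k)) /\
      (forall k, j <= k -> ~ X (g k)) /\
      exists l, path_from_to (fun z => V z /\ ~ X z) (f i) (g j) l.

Definition weak_normal_tree : Prop :=
  rooted_tree /\
  (forall C, connected C ->
     forall u v, C u -> C v -> V u -> V v -> ~ tle u v -> ~ tle v u ->
       exists w, C w /\ tle w u /\ tle w v) /\
  (forall u v, V u -> V v -> tle u v ->
     exists C, connected C /\ C u /\ C v /\
       forall x, C x -> ~ (tle x u /\ x <> u)).

Definition normal_tree : Prop :=
  weak_normal_tree /\
  forall f, ray f -> f 0 = r ->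
    exists N, necklace N /\ exists n0, forall n, n0 <= n -> N (f n).

Definition normal_spanning_tree : Prop :=
  normal_tree /\ forall x, V x.

End Defs.

(* For a necklace N, call a vertex t of T good if almost all of N lies above t. The root is
   good, good vertices are pairwise comparable, and normality confines the tail of N beyond
   the down-closure of a good t above a single child of t, which is again good; so the good
   vertices form a rooted ray, the ray of N. Equivalent necklaces have the same ray: were
   the rays to part at t, the common component of S minus the down-closure of t would
   contain, by normality, a vertex below both branches but not below t. Equivalent rays of
   necklaces coincide, as a path of T avoiding the down-closure of t stays above one child
   of t; and necklaces with the same ray are equivalent, since beyond any finite X the ray
   reaches a vertex whose up-closure is connected and contains both tails. Finally every
   ray of T shares a tail with a rooted ray, which by normality carries a necklace whose
   ray it is. *)

From Stdlib Require Import List Arith Lia Classical ClassicalEpsilon.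
Import ListNotations.
Set Implicit Arguments.
Unset Strict Implicit.

Section Lists.
Variable U : Type.

Lemma chain_app (R : U -> U -> Prop) l1 a l2 :
  chain R (l1 ++ a :: l2) <-> chain R (l1 ++ [a]) /\ chain R (a :: l2).
Proof. induction l1 as [|b [|c l1] IH]; simpl in *; tauto. Qed.

Lemma chain_tail (R : U -> U -> Prop) x l : chain R (x :: l) -> chain R l.
Proof. destruct l; simpl; tauto. Qed.

Lemma chain_rev_sym (R : U -> U -> Prop) l :
  (forall x y, R x y -> R y x) -> chain R l -> chain R (rev l).
Proof.
  intro Rsym. induction l as [|x [|y l] IH]; simpl; auto.
  intros [Rxy Cyl]. rewrite <- app_assoc. apply chain_app.
  split; [exact (IH Cyl)|]. simpl; auto.
Qed.

Lemma chain_nth (R : U -> U -> Prop) l i d :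
  chain R l -> S i < length l -> R (nth i l d) (nth (S i) l d).
Proof.
  revert i. induction l as [|a [|b l] IH]; intros i C Hi; simpl in Hi; try lia.
  destruct C as [Rab C]. destruct i as [|i]; [exact Rab|].
  apply (IH i C). simpl; lia.
Qed.

Lemma NoDup_app_disjoint (l1 l2 : list U) a : NoDup (l1 ++ l2) -> In a l1 -> ~ In a l2.
Proof.
  induction l1 as [|b l1 IH]; simpl; [tauto|].
  intros H [<-|Ha]; inversion H; subst; auto.
  intro. apply H2. apply in_or_app; auto.
Qed.

Lemma split_at_first (P : U -> Prop) l : (exists w, In w l /\ P w) ->
  exists p z q, l = p ++ z :: q /\ P z /\ forall w, In w p -> ~ P w.
Proof.
  induction l as [|a l IH]; simpl; intros [w [Hw Pw]]; [contradiction|].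
  destruct (classic (P a)) as [Pa|nPa].
  - exists [], a, l. simpl. auto.
  - destruct Hw as [<-|Hw]; [contradiction|].
    destruct IH as [p [z [q [-> [Pz Hp]]]]]; eauto.
    exists (a :: p), z, q. simpl. repeat split; auto.
    intros w' [<-|H]; auto.
Qed.

Lemma hd_error_rev_Some (l : list U) y : hd_error (rev l) = Some y <-> exists l', l = l' ++ [y].
Proof.
  split.
  - destruct l using rev_ind; simpl; [discriminate|].
    rewrite rev_unit. simpl. intros [= ->]. eauto.
  - intros [l' ->]. rewrite rev_unit. reflexivity.
Qed.

Lemma injective_list_bound (f : nat -> U) (l : list U) n :
  (forall m k, f m = f k -> m = k) -> (forall m, m <= n -> In (f m) l) -> n < length l.
Proof.
  intros Hinj Hin.
  assert (ND : NoDup (map f (seq 0 (S n)))).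
  { apply NoDup_map_NoDup_ForallPairs; [intros a b _ _; apply Hinj|apply seq_NoDup]. }
  assert (Sub : incl (map f (seq 0 (S n))) l).
  { intros x Hx. apply in_map_iff in Hx. destruct Hx as [m [<- Hm]].
    apply in_seq in Hm. apply Hin. lia. }
  pose proof (NoDup_incl_length ND Sub). rewrite length_map, length_seq in *. lia.
Qed.

End Lists.

Section FiniteSets.
Variable U : Type.

Lemma finite_set_sub (A B : U -> Prop) : subset A B -> finite_set B -> finite_set A.
Proof. intros H [l Hl]. exists l. unfold subset in H. auto. Qed.

Lemma finite_set_union (A B : U -> Prop) :
  finite_set A -> finite_set B -> finite_set (fun x => A x \/ B x).
Proof. intros [l1 H1] [l2 H2]. exists (l1 ++ l2). intros x [Hx|Hx]; apply in_or_app; auto. Qed.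

Lemma cofinite_meet (N A B : U -> Prop) : ~ finite_set N ->
  finite_set (fun x => N x /\ ~ A x) -> finite_set (fun x => N x /\ ~ B x) ->
  exists x, N x /\ A x /\ B x.
Proof.
  intros HN HA HB. apply NNPP. intro Hno. apply HN.
  eapply finite_set_sub; [|exact (finite_set_union HA HB)].
  intros x Nx. destruct (classic (A x)); [|tauto]. destruct (classic (B x)); [|tauto].
  exfalso; eauto.
Qed.

Lemma injective_eventually_avoids (f : nat -> U) (X : U -> Prop) :
  (forall m n, f m = f n -> m = n) -> finite_set X -> exists i, forall n, i <= n -> ~ X (f n).
Proof.
  intros Hinj [l Hl].
  enough (exists i, forall n, i <= n -> ~ In (f n) l) as [i Hi]
    by (exists i; intros n Hn HX; exact (Hi n Hn (Hl _ HX))).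
  clear Hl. induction l as [|a l [i Hi]]; [exists 0; simpl; auto|].
  destruct (classic (exists n0, f n0 = a)) as [[n0 <-]|Hno].
  - exists (max i (S n0)). intros n Hn [Ha|Ha]; [apply Hinj in Ha; lia|].
    apply (Hi n); auto; lia.
  - exists i. intros n Hn [Ha|Ha]; eauto. apply (Hi n); auto.
Qed.

End FiniteSets.

Section Connectoid.
Variable U : Type.
Variable fam : (U -> Prop) -> Prop.
Hypothesis Hc : is_connectoid fam.

Lemma fam_join (C : U -> Prop) F F' x y p : fam F -> fam F' -> subset F C -> subset F' C ->
  F x -> F p -> F' p -> F' y -> exists G, fam G /\ subset G C /\ G x /\ G y.
Proof.
  destruct Hc as [_ [Hunion _]].
  intros HF HF' SF SF' Fx Fp F'p F'y.
  destruct (Hunion F F' HF HF' (ex_intro _ p (conj Fp F'p))) as [G [HG HGi]].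
  exists G. repeat split; auto; try (apply HGi; auto).
  intros z Hz. apply HGi in Hz. destruct Hz; auto.
Qed.

Lemma connected_singleton p : connected fam (fun x => x = p).
Proof.
  destruct Hc as [_ [_ [_ Hsingle]]]. intros x y -> ->.
  destruct (Hsingle p) as [G [HG HGp]].
  exists G. repeat split; auto; try apply HGp; auto. intros z Hz; apply HGp; auto.
Qed.

Lemma connected_union C1 C2 p : connected fam C1 -> connected fam C2 -> C1 p -> C2 p ->
  connected fam (fun x => C1 x \/ C2 x).
Proof.
  intros H1 H2 P1 P2.
  assert (Hcross : forall Ca Cb x y, (forall z, Ca z -> C1 z \/ C2 z) ->
    (forall z, Cb z -> C1 z \/ C2 z) -> connected fam Ca -> connected fam Cb ->
    Ca p -> Cb p -> Ca x -> Cb y ->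
    exists F, fam F /\ subset F (fun z => C1 z \/ C2 z) /\ F x /\ F y).
  { intros Ca Cb x y Sa Sb Ha Hb Pa Pb Hx Hy.
    destruct (Ha x p Hx Pa) as [F [HF [SF [Fx Fp]]]].
    destruct (Hb p y Pb Hy) as [F' [HF' [SF' [F'p F'y]]]].
    apply fam_join with F F' p; auto; intros z Hz; [apply Sa, SF|apply Sb, SF']; auto. }
  intros x y [Hx|Hx] [Hy|Hy].
  - apply (Hcross C1 C1); auto.
  - apply (Hcross C1 C2); auto.
  - apply (Hcross C2 C1); auto.
  - apply (Hcross C2 C2); auto.
Qed.

Definition component_of (A : U -> Prop) p : U -> Prop :=
  fun x => exists C, connected fam C /\ subset C A /\ C p /\ C x.

Lemma component_of_self A p : A p -> component_of A p p.
Proof.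
  intro Ap. exists (fun x => x = p).
  split; [apply connected_singleton|]. split; [intros z ->; auto|]. auto.
Qed.

Lemma component_of_absorbs A p C q : connected fam C -> subset C A -> C q ->
  component_of A p q -> subset C (component_of A p).
Proof.
  intros HC SC Cq [C' [HC' [SC' [C'p C'q]]]] x Cx.
  exists (fun z => C z \/ C' z). split; [|split; [|split]].
  - apply connected_union with q; auto.
  - intros z [Hz|Hz]; auto.
  - auto.
  - auto.
Qed.

Lemma component_of_component A p : A p -> component fam A (component_of A p).
Proof.
  intro Ap. split; [|split].
  - intros x y [C1 [H1 [S1 [P1 X1]]]] [C2 [H2 [S2 [P2 Y2]]]].
    destruct (connected_union H1 H2 P1 P2 (or_introl X1) (or_intror Y2))
      as [F [HF [SF [Fx Fy]]]].
    exists F. repeat split; auto. intros z Fz.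
    exists (fun x => C1 x \/ C2 x). repeat split; auto.
    + apply connected_union with p; auto.
    + intros w [Hw|Hw]; auto.
  - intros x [C [_ [SC [_ Cx]]]]. auto.
  - intros K' HK' SK' SK'A.
    assert (Hp : component_of A p p) by (apply component_of_self, Ap).
    apply (component_of_absorbs (q := p)); auto.
Qed.

Section Necklace.
Variable N : U -> Prop.
Variable H : nat -> (U -> Prop).
Hypothesis Hbeads : forall n, finite_set (H n) /\ connected fam (H n).
Hypothesis Hcover : forall x, N x <-> exists n, H n x.
Hypothesis Hoverlap : forall i j, (exists x, H i x /\ H j x) <-> (i <= j + 1 /\ j <= i + 1).

Lemma bead_inhabited n : exists x, H n x.
Proof. destruct (proj2 (Hoverlap n n)) as [x [Hx _]]; [lia|eauto]. Qed.

Lemma bead_overlap i j x : H i x -> H j x -> i <= j + 1 /\ j <= i + 1.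
Proof. intros. apply Hoverlap. eauto. Qed.

Lemma beads_infinite : ~ finite_set N.
Proof.
  intros [l Hl].
  destruct (choice (fun n x => H (2 * n) x) (fun n => bead_inhabited (2 * n))) as [h Hh].
  assert (length l < length l); [|lia].
  apply (injective_list_bound (f := h)).
  - intros m k Emk. pose proof (Hh k) as Hk. rewrite <- Emk in Hk.
    pose proof (bead_overlap (Hh m) Hk). lia.
  - intros m _. apply Hl, Hcover. eauto.
Qed.

(* Each point lies in at most two beads, so a finite set meets only finitely many. *)
Lemma beads_eventually_avoid (X : U -> Prop) : finite_set X ->
  exists n0, forall n x, n0 <= n -> H n x -> ~ X x.
Proof.
  intros [l Hl].
  enough (exists n0, forall n x, n0 <= n -> H n x -> ~ In x l) as [n0 Hn0]
    by (exists n0; intros n x Hn Hx HX; exact (Hn0 n x Hn Hx (Hl x HX))).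
  clear Hl. induction l as [|a l [n0 Hn0]]; [exists 0; simpl; auto|].
  destruct (classic (exists m, H m a)) as [[m Hm]|Hno].
  - exists (max n0 (m + 2)). intros n x Hn Hx [<-|Hin].
    + pose proof (bead_overlap Hx Hm). lia.
    + apply (Hn0 n x); auto; lia.
  - exists n0. intros n x Hn Hx [<-|Hin]; eauto. apply (Hn0 n x); auto.
Qed.

Lemma beads_from_connected n0 : connected fam (fun z => exists n, n0 <= n /\ H n z).
Proof.
  set (K0 := fun z => exists n, n0 <= n /\ H n z).
  assert (Hchain : forall d i x y, n0 <= i -> H i x -> H (i + d) y ->
    exists F, fam F /\ subset F K0 /\ F x /\ F y).
  { induction d as [|d IH]; intros i x y Hi Hx Hy.
    - rewrite Nat.add_0_r in Hy. destruct (proj2 (Hbeads i) x y Hx Hy) as [F [HF [SF FxFy]]].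
      exists F. repeat split; try apply FxFy; auto. intros z Hz. exists i. auto.
    - destruct (proj2 (Hoverlap i (S i))) as [z [Hz1 Hz2]]; [lia|].
      destruct (proj2 (Hbeads i) x z Hx Hz1) as [F [HF [SF [Fx Fz]]]].
      rewrite Nat.add_succ_r in Hy.
      destruct (IH (S i) z y) as [F' [HF' [SF' [F'z F'y]]]]; auto.
      apply fam_join with F F' z; auto. intros w Hw. exists i. auto. }
  intros x y [i [Hi Hx]] [j [Hj Hy]].
  destruct (le_ge_dec i j).
  - replace j with (i + (j - i)) in Hy by lia. exact (Hchain _ i x y Hi Hx Hy).
  - replace i with (j + (i - j)) in Hx by lia.
    destruct (Hchain _ j y x Hj Hy Hx) as [F [HF [SF [Fy Fx]]]]. exists F; auto.
Qed.

Lemma beads_below_finite m : finite_set (fun x => exists n, n < m /\ H n x).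
Proof.
  induction m as [|m IH]; [exists []; intros x [n [Hn _]]; lia|].
  eapply finite_set_sub; [|exact (finite_set_union IH (proj1 (Hbeads m)))].
  intros x [n [Hn Hx]]. destruct (Nat.eq_dec n m) as [->|Hne]; auto.
  left. exists n. split; auto. lia.
Qed.

Lemma beads_tail (X : U -> Prop) : finite_set X -> exists K, is_tail fam N X K.
Proof.
  intro HX. destruct (beads_eventually_avoid HX) as [n0 Hn0].
  set (K0 := fun z => exists n, n0 <= n /\ H n z).
  set (A := fun x => N x /\ ~ X x).
  assert (K0A : subset K0 A).
  { intros z [n [Hn Hz]]. split; [apply Hcover; eauto|]. eapply Hn0; eauto. }
  destruct (bead_inhabited n0) as [p Hp].
  assert (K0p : K0 p) by (exists n0; auto).
  exists (component_of A p). split; [apply component_of_component, K0A, K0p|].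
  eapply finite_set_sub; [|exact (beads_below_finite n0)]. intros x [Nx Kx].
  apply Hcover in Nx. destruct Nx as [n Hn]. exists n. split; auto.
  destruct (le_lt_dec n0 n); auto. exfalso. apply Kx.
  apply (component_of_absorbs (C := K0) (q := p)); auto.
  - apply beads_from_connected.
  - apply component_of_self, K0A, K0p.
  - exists n; auto.
Qed.

End Necklace.

Lemma necklace_infinite N : necklace fam N -> ~ finite_set N.
Proof. intros [_ [H [H1 [H2 H3]]]]. eapply beads_infinite; eauto. Qed.

Lemma necklace_tail N X : necklace fam N -> finite_set X -> exists K, is_tail fam N X K.
Proof. intros [_ [H [H1 [H2 H3]]]] HX. eapply beads_tail; eauto. Qed.

End Connectoid.

Section Tree.
Variable U : Type.
Variable V : U -> Prop.
Variable E : U -> U -> Prop.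
Variable r : U.
Hypothesis HV : forall x, V x.
Hypothesis Hsym : forall x y, E x y -> E y x.
Hypothesis Hirr : forall x, ~ E x x.
Hypothesis Hconn : graph_connected V E.
Hypothesis Hnocyc : ~ has_cycle V E.

Local Notation le := (tle V E r).

(* [path_from_to] without its vertex constraint, which is vacuous for a spanning tree. *)
Definition tpath x y l := NoDup l /\ chain E l /\ hd_error l = Some x /\ exists l', l = l' ++ [y].

Lemma path_from_to_tpath x y l : path_from_to E V x y l <-> tpath x y l.
Proof.
  unfold path_from_to, gpath, tpath. rewrite hd_error_rev_Some. split; [tauto|].
  intros [H1 [H2 [H3 H4]]]. repeat split; auto. apply Forall_forall; auto.
Qed.

Lemma snoc_cons_tail (x y : U) t l' : x :: t = l' ++ [y] -> t <> [] -> exists l'', t = l'' ++ [y].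
Proof. intros H Ht. destruct l' as [|z l']; inversion H; subst; [congruence|eauto]. Qed.

Lemma tpath_tail x a A y : tpath x y (x :: a :: A) -> tpath a y (a :: A).
Proof.
  intros [H1 [[_ H2] [_ [l' H4]]]]. inversion H1; subst.
  apply snoc_cons_tail in H4; [|discriminate]. repeat split; auto.
Qed.

Lemma tpath_last_In_tail x a A y : tpath x y (x :: a :: A) -> In y (a :: A).
Proof.
  intros [_ [_ [_ [l' H]]]]. apply snoc_cons_tail in H as [l'' ->]; [|discriminate].
  apply in_or_app; simpl; auto.
Qed.

(* Two paths from [x] to [y] that leave [x] along different edges close up a cycle:
   follow the first up to its first vertex [z] on the second, then return along the second. *)
Lemma forked_paths_cycle x a A b B y :
  tpath x y (x :: a :: A) -> tpath x y (x :: b :: B) -> a <> b -> has_cycle V E.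
Proof.
  intros PA PB Hab.
  destruct (@split_at_first _ (fun w => In w (b :: B)) (a :: A)) as [p [z [q [HA [HzB Hp]]]]].
  { exists y. split; [apply (tpath_last_In_tail PA)|apply (tpath_last_In_tail PB)]. }
  destruct (in_split _ _ HzB) as [u [v HB]].
  destruct PA as [NA [CA _]]. destruct PB as [NB [CB _]].
  apply NoDup_cons_iff in NA as [xA NA]. apply NoDup_cons_iff in NB as [xB NB].
  rewrite HA in xA, NA, CA. rewrite HB in xB, NB, CB.
  exists x, (p ++ z :: rev u). split; [split; [apply Forall_forall; auto|split]|split].
  - constructor.
    + intro Hin. apply in_app_or in Hin as [Hin|[<-|Hin]].
      * apply xA, in_or_app; auto.
      * apply xA, in_or_app; simpl; auto.
      * apply xB, in_or_app. left. apply in_rev; auto.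
    + apply NoDup_app.
      * eapply NoDup_app_remove_r; eauto.
      * constructor.
        -- rewrite <- in_rev. intro Hz. apply (NoDup_remove_2 _ _ _ NB), in_or_app; auto.
        -- apply NoDup_rev. eapply NoDup_app_remove_r; eauto.
      * intros w Hw Hw2. apply (Hp w Hw). rewrite HB.
        destruct Hw2 as [<-|Hw2]; apply in_or_app; simpl; auto.
        left. apply in_rev; auto.
  - change (chain E ((x :: p) ++ z :: rev u)). apply chain_app. split.
    + change (chain E ((x :: p) ++ z :: q)) in CA. apply chain_app in CA. tauto.
    + apply chain_tail, chain_app in CB. destruct CB as [CB _].
      apply chain_rev_sym in CB; auto. rewrite rev_unit in CB. exact CB.
  - rewrite length_app. simpl. rewrite length_rev.
    destruct p as [|p1 p]; destruct u as [|u1 u]; simpl; try lia.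
    exfalso. simpl in HA, HB. inversion HA; inversion HB; congruence.
  - destruct u as [|u1 u]; simpl in HB; inversion HB; subst; simpl in CB; destruct CB as [Exb _].
    + rewrite last_last. auto.
    + simpl. rewrite app_comm_cons, app_assoc, last_last. auto.
Qed.

Lemma tpath_unique a b x y : tpath x y a -> tpath x y b -> a = b.
Proof.
  revert b x. induction a as [|x0 A IH]; intros b x Ha Hb;
    [destruct Ha as [_ [_ [Hh _]]]; discriminate|].
  destruct b as [|x1 B]; [destruct Hb as [_ [_ [Hh _]]]; discriminate|].
  assert (x0 = x) by (destruct Ha as [_ [_ [Hh _]]]; simpl in Hh; congruence). subst x0.
  assert (x1 = x) by (destruct Hb as [_ [_ [Hh _]]]; simpl in Hh; congruence). subst x1.
  assert (Hend : forall a A, tpath x y (x :: a :: A) -> tpath x y [x] -> False).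
  { intros a' A' Hp [_ [_ [_ [l Hl]]]].
    destruct l as [|? [|]]; inversion Hl; subst.
    pose proof (tpath_last_In_tail Hp). destruct Hp as [Hnd _]. inversion Hnd; auto. }
  destruct A as [|a A]; destruct B as [|b B]; auto.
  - exfalso. eapply Hend; eauto.
  - exfalso. eapply Hend; eauto.
  - destruct (classic (a = b)) as [<-|Hne].
    + f_equal. apply IH with a; eapply tpath_tail; eauto.
    + exfalso. exact (Hnocyc (forked_paths_cycle Ha Hb Hne)).
Qed.

Lemma root_path_exists y : exists l, tpath r y l.
Proof. destruct (Hconn (HV r) (HV y)) as [l Hl]. exists l. apply path_from_to_tpath; auto. Qed.

Definition root_path y : list U :=
  proj1_sig (constructive_indefinite_description _ (root_path_exists y)).

Lemma root_path_spec y : tpath r y (root_path y).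
Proof. exact (proj2_sig (constructive_indefinite_description _ (root_path_exists y))). Qed.

Lemma root_path_unique y l : tpath r y l -> l = root_path y.
Proof. intro H. exact (tpath_unique H (root_path_spec y)). Qed.

Lemma root_path_last y : exists l', root_path y = l' ++ [y].
Proof. apply root_path_spec. Qed.

Lemma root_path_inj x y : root_path x = root_path y -> x = y.
Proof.
  intro H. destruct (root_path_last x) as [l1 H1]. destruct (root_path_last y) as [l2 H2].
  rewrite H1, H2 in H. apply app_inj_tail in H. tauto.
Qed.

Lemma root_path_prefix y l1 c l2 : root_path y = l1 ++ c :: l2 -> root_path c = l1 ++ [c].
Proof.
  intro H. symmetry. apply root_path_unique. destruct (root_path_spec y) as [N [C [Hh _]]].
  rewrite H in N, C, Hh. repeat split.
  - replace (l1 ++ c :: l2) with ((l1 ++ [c]) ++ l2) in N by (rewrite <- app_assoc; auto).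
    eapply NoDup_app_remove_r; eauto.
  - apply chain_app in C. tauto.
  - destruct l1; simpl in *; auto.
  - eauto.
Qed.

Lemma tpath_snoc y l z : tpath r y l -> ~ In z l -> E y z -> tpath r z (l ++ [z]).
Proof.
  intros [N [C [Hh [l' Hl]]]] Hz Hyz. repeat split.
  - apply NoDup_app; auto; [repeat constructor; auto|]. intros a Ha [<-|[]]. auto.
  - subst l. rewrite <- app_assoc. apply chain_app. simpl; auto.
  - destruct l; simpl in *; auto. discriminate.
  - eauto.
Qed.

Lemma tle_In_root_path x y : le x y <-> In x (root_path y).
Proof.
  split.
  - intros [l [Hl Hx]]. apply path_from_to_tpath in Hl. rewrite (root_path_unique Hl) in Hx. auto.
  - intro H. exists (root_path y). split; auto. apply path_from_to_tpath, root_path_spec.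
Qed.

Lemma tle_prefix x y : le x y <-> exists s, root_path y = root_path x ++ s.
Proof.
  rewrite tle_In_root_path. split.
  - intro H. destruct (in_split _ _ H) as [l1 [l2 Hs]].
    rewrite (root_path_prefix Hs). exists l2. rewrite Hs, <- app_assoc. reflexivity.
  - intros [s ->]. destruct (root_path_last x) as [l' ->].
    apply in_or_app. left. apply in_or_app. simpl. auto.
Qed.

Lemma tle_refl x : le x x.
Proof. apply tle_prefix. exists []. rewrite app_nil_r. auto. Qed.

Lemma tle_trans x y z : le x y -> le y z -> le x z.
Proof.
  rewrite !tle_prefix. intros [s1 H1] [s2 H2]. exists (s1 ++ s2). rewrite H2, H1, app_assoc. auto.
Qed.

Lemma tle_antisym x y : le x y -> le y x -> x = y.
Proof.
  rewrite !tle_prefix. intros [s1 H1] [s2 H2]. apply root_path_inj.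
  assert (L1 : length (root_path y) = length (root_path x) + length s1)
    by (rewrite H1, length_app; auto).
  assert (L2 : length (root_path x) = length (root_path y) + length s2)
    by (rewrite H2, length_app; auto).
  destruct s1; [rewrite app_nil_r in H1; auto|]. simpl in L1. lia.
Qed.

Lemma tle_root x : le r x.
Proof.
  apply tle_In_root_path. destruct (root_path_spec x) as [_ [_ [Hh _]]].
  destruct (root_path x); inversion Hh; simpl; auto.
Qed.

Lemma tle_down_total x y z : le x z -> le y z -> le x y \/ le y x.
Proof.
  rewrite !tle_prefix. intros [s1 H1] [s2 H2]. rewrite H1 in H2.
  apply app_eq_app in H2. destruct H2 as [l [[H2 _]|[H2 _]]]; [right|left]; exists l; auto.
Qed.

Lemma tle_down_finite t : finite_set (fun x => le x t).
Proof. exists (root_path t). intros x Hx. apply tle_In_root_path; auto. Qed.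

Lemma down_closure_finite X : finite_set X -> finite_set (fun y => exists x, X x /\ le y x).
Proof.
  intros [l Hl]. exists (flat_map root_path l). intros y [x [Xx Hyx]].
  apply in_flat_map. exists x. split; [auto|apply tle_In_root_path; auto].
Qed.

Definition child t c := root_path c = root_path t ++ [c].

Lemma edge_child x y : E x y -> child x y \/ child y x.
Proof.
  intro Hxy. unfold child. destruct (classic (In y (root_path x))) as [Hin|Hn].
  - right. destruct (in_split _ _ Hin) as [l1 [l2 Hs]].
    assert (Hs' : root_path x = root_path y ++ l2)
      by (rewrite Hs, (root_path_prefix Hs), <- app_assoc; auto).
    destruct l2 as [|a l2].
    + rewrite app_nil_r in Hs'. apply root_path_inj in Hs'. subst. exfalso; eapply Hirr; eauto.
    + destruct (root_path_last x) as [lx Hlx].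
      assert (Hxin : In x (a :: l2)).
      { rewrite Hs' in Hlx. destruct (@exists_last _ (a :: l2)) as [l0 [b Hb]]; [discriminate|].
        rewrite Hb in Hlx |- *. rewrite app_assoc in Hlx.
        apply app_inj_tail in Hlx as [_ ->]. apply in_or_app; simpl; auto. }
      symmetry. apply root_path_unique. apply tpath_snoc with (y := y); auto.
      * apply root_path_spec.
      * destruct (root_path_spec x) as [N _]. rewrite Hs' in N. intro Hx.
        eapply NoDup_app_disjoint; eauto.
  - left. symmetry. apply root_path_unique.
    apply tpath_snoc with (y := x); auto. apply root_path_spec.
Qed.

Lemma child_tle t c : child t c -> le t c.
Proof. intro H. apply tle_prefix. eauto. Qed.

Lemma child_neq t c : child t c -> t <> c.
Proof.
  intros H <-. destruct (root_path_spec t) as [N _]. rewrite H in N.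
  apply (NoDup_app_disjoint N (a := t)); simpl; auto.
  destruct (root_path_last t) as [l ->]. apply in_or_app; simpl; auto.
Qed.

Lemma child_edge t c : child t c -> E t c.
Proof.
  intro H. destruct (root_path_spec c) as [_ [C _]]. rewrite H in C.
  destruct (root_path_last t) as [l Hl]. rewrite Hl, <- app_assoc in C.
  apply chain_app in C. simpl in C. tauto.
Qed.

Lemma child_below t c y : child t c -> le y c -> y <> c -> le y t.
Proof.
  unfold child. intros Hc Hyc Hne. apply tle_prefix in Hyc as [s Hs].
  apply tle_prefix. rewrite Hc in Hs.
  destruct s as [|a s] using rev_ind.
  - rewrite app_nil_r in Hs. exfalso. apply Hne, root_path_inj. congruence.
  - rewrite app_assoc in Hs. apply app_inj_tail in Hs as [Hs _]. eauto.
Qed.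

Lemma child_tle_of_not_tle_parent t c a w : child t c -> le c a -> le w a -> ~ le w t -> le c w.
Proof.
  intros Hc Hca Hwa Hwt. destruct (tle_down_total Hca Hwa) as [H|H]; auto.
  destruct (classic (w = c)) as [->|Hne]; [apply tle_refl|].
  exfalso. exact (Hwt (child_below Hc H Hne)).
Qed.

Lemma child_above_tle t x : le t x -> t <> x -> exists c, child t c /\ le c x.
Proof.
  intros H Hne. apply tle_prefix in H as [s Hs].
  destruct s as [|c s].
  - rewrite app_nil_r in Hs. exfalso. apply Hne, root_path_inj. auto.
  - exists c. unfold child. split.
    + eapply root_path_prefix; eauto.
    + apply tle_prefix. exists s. rewrite (root_path_prefix Hs), <- app_assoc. auto.
Qed.

Lemma children_no_common_upper t c c' z : child t c -> child t c' -> c <> c' ->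
  le c z -> le c' z -> False.
Proof.
  assert (Hinc : forall c c', child t c -> child t c' -> c <> c' -> ~ le c c').
  { intros d d' Hd Hd' Hne Hle. apply (child_neq Hd), tle_antisym; [apply child_tle; auto|].
    exact (child_below Hd' Hle Hne). }
  intros H1 H2 Hne Hz Hz'. destruct (tle_down_total Hz Hz') as [H|H].
  - exact (Hinc c c' H1 H2 Hne H).
  - exact (Hinc c' c H2 H1 (not_eq_sym Hne) H).
Qed.

Lemma chain_above_child t c : child t c -> forall l h, chain E (h :: l) -> le c h ->
  (forall x, In x (h :: l) -> ~ le x t) -> forall x, In x l -> le c x.
Proof.
  intros Hc l. induction l as [|a l IH]; intros h Hch Hh Hav x Hx; [destruct Hx|].
  destruct Hch as [Eha Hch].
  assert (Ha : le c a).
  { destruct (edge_child Eha) as [H|H]; apply child_tle in H; [eapply tle_trans; eauto|].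
    apply (child_tle_of_not_tle_parent Hc Hh H). apply Hav. simpl; auto. }
  destruct Hx as [<-|Hx]; auto.
  apply (IH a); auto. intros y Hy. apply Hav. simpl in *. tauto.
Qed.

Definition rooted_ray g := ray V E g /\ g 0 = r.

Lemma rooted_ray_root_path g : rooted_ray g -> forall n, root_path (g n) = map g (seq 0 (S n)).
Proof.
  intros [[Hinj [_ He]] H0]. induction n as [|n IH].
  - simpl. rewrite H0. symmetry. apply root_path_unique. repeat split; simpl; auto.
    + repeat constructor. auto.
    + exists []. auto.
  - rewrite (seq_S (S n) 0), map_app, <- IH. symmetry. apply root_path_unique.
    apply tpath_snoc with (y := g n); [apply root_path_spec| |auto].
    rewrite IH. intro Hin. apply in_map_iff in Hin as [m [Hm Hin]].
    apply in_seq in Hin. apply Hinj in Hm. lia.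
Qed.

Lemma rooted_ray_child g : rooted_ray g -> forall n, child (g n) (g (S n)).
Proof.
  intros Hg n. unfold child. rewrite !(rooted_ray_root_path Hg), (seq_S (S n) 0), map_app. auto.
Qed.

Lemma rooted_ray_mono g : rooted_ray g -> forall m n, m <= n -> le (g m) (g n).
Proof.
  intros Hg m n Hmn. apply tle_In_root_path. rewrite (rooted_ray_root_path Hg).
  apply in_map, in_seq. lia.
Qed.

Lemma rooted_ray_of_children g : g 0 = r -> (forall n, child (g n) (g (S n))) -> rooted_ray g.
Proof.
  intros H0 Hch.
  assert (Hmono : forall m d, le (g m) (g (m + d))).
  { intros m d. induction d as [|d IH]; [rewrite Nat.add_0_r; apply tle_refl|].
    eapply tle_trans; [exact IH|]. rewrite Nat.add_succ_r. apply child_tle, Hch. }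
  assert (Hlt : forall m n, m < n -> g m <> g n).
  { intros m n Hmn Heq. apply (child_neq (Hch m)), tle_antisym; [apply child_tle, Hch|].
    rewrite Heq. replace n with (S m + (n - S m)) by lia. apply Hmono. }
  repeat split; auto.
  - intros m n Heq. destruct (Nat.lt_trichotomy m n) as [H|[H|H]]; auto;
      exfalso; [exact (Hlt _ _ H Heq)|exact (Hlt _ _ H (eq_sym Heq))].
  - intro n. apply child_edge, Hch.
Qed.

Lemma rooted_ray_eq_of_common_upper g g' : rooted_ray g -> rooted_ray g' ->
  (forall n, g n = g' n -> exists z, le (g (S n)) z /\ le (g' (S n)) z) ->
  forall n, g n = g' n.
Proof.
  intros Hg Hg' Hup. induction n as [|n IH]; [rewrite (proj2 Hg), (proj2 Hg'); auto|].
  destruct (Hup n IH) as [z [Hz Hz']].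
  assert (Hc' : child (g n) (g' (S n))) by (rewrite IH; apply (rooted_ray_child Hg')).
  apply NNPP. intro Hne.
  exact (children_no_common_upper (rooted_ray_child Hg n) Hc' Hne Hz Hz').
Qed.

Lemma ray_equiv_of_common_tail R g m k : ray V E R -> ray V E g ->
  (forall j, g (m + j) = R (k + j)) -> ray_equiv V E R g.
Proof.
  intros [HR _] Hg Hsh X HX.
  destruct (injective_eventually_avoids HR HX) as [i0 Hi0].
  exists (k + i0), (m + i0). split; [|split].
  - intros n Hn. apply Hi0. lia.
  - intros n Hn. replace n with (m + (n - m)) by lia. rewrite Hsh. apply Hi0. lia.
  - exists [R (k + i0)]. rewrite Hsh. repeat split; simpl; auto.
    + repeat constructor; auto. apply Hi0; lia.
    + repeat constructor. auto.
Qed.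

Section RayTail.
Variable R : nat -> U.
Hypothesis HR : ray V E R.

Lemma ray_child_persists n : child (R n) (R (S n)) -> child (R (S n)) (R (S (S n))).
Proof.
  destruct HR as [Hinj [_ He]]. intro H.
  destruct (edge_child (He (S n))) as [H1|H1]; auto. exfalso.
  unfold child in H, H1. rewrite H1 in H. apply app_inj_tail in H as [H _].
  apply root_path_inj, Hinj in H. lia.
Qed.

(* Otherwise the root paths along [R] would shrink forever. *)
Lemma ray_eventually_child : exists k, child (R k) (R (S k)).
Proof.
  apply NNPP. intro Hno.
  assert (Hd : forall n, length (root_path (R n)) + n = length (root_path (R 0))).
  { destruct HR as [_ [_ He]]. induction n as [|n IH]; [lia|].
    destruct (edge_child (He n)) as [H1|H1]; [exfalso; eauto|].
    unfold child in H1. rewrite H1, length_app in IH. simpl in IH. lia. }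
  specialize (Hd (length (root_path (R 0)))).
  destruct (root_path_last (R (length (root_path (R 0))))) as [l Hl].
  rewrite Hl, length_app in Hd. simpl in Hd. lia.
Qed.

Lemma ray_eventually_ascending : exists k, forall j, child (R (k + j)) (R (k + S j)).
Proof.
  destruct ray_eventually_child as [k Hk]. exists k.
  induction j as [|j IH]; [rewrite Nat.add_0_r, Nat.add_1_r; exact Hk|].
  rewrite !Nat.add_succ_r. apply ray_child_persists. rewrite <- Nat.add_succ_r. auto.
Qed.

Lemma ascending_root_paths k : (forall j, child (R (k + j)) (R (k + S j))) ->
  forall j, root_path (R (k + j)) = root_path (R k) ++ map (fun i => R (k + S i)) (seq 0 j).
Proof.
  intros Hk j. induction j as [|j IH]; [rewrite Nat.add_0_r, app_nil_r; auto|].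
  rewrite (seq_S j 0), map_app, app_assoc, <- IH. apply Hk.
Qed.

Lemma ray_tail_of_rooted_ray : exists g m k, rooted_ray g /\ forall j, g (m + j) = R (k + j).
Proof.
  destruct ray_eventually_ascending as [k Hk].
  pose proof (ascending_root_paths Hk) as Hpaths.
  set (L := root_path (R k)) in Hpaths.
  assert (Hlen : forall j, length (root_path (R (k + j))) = length L + j).
  { intro j. rewrite Hpaths, length_app, length_map, length_seq. auto. }
  assert (HL : 1 <= length L)
    by (destruct (root_path_last (R k)) as [l Hl]; unfold L; rewrite Hl, length_app; simpl; lia).
  set (g := fun n => nth n L (R (k + S (n - length L)))).
  assert (Hg : forall n j, n < length L + j -> g n = nth n (root_path (R (k + j))) r).
  { intros n j Hn. unfold g. rewrite Hpaths. destruct (Nat.lt_ge_cases n (length L)) as [Hnm|Hnm].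
    - rewrite app_nth1 by auto. apply nth_indep. auto.
    - rewrite app_nth2 by auto. rewrite nth_overflow by auto.
      rewrite nth_indep with (d' := R (k + S 0)) by (rewrite length_map, length_seq; lia).
      rewrite (map_nth (fun i => R (k + S i))), seq_nth by lia. auto. }
  exists g, (length L - 1), k. split; [repeat split|].
  - intros a b Hab. rewrite (Hg a (a + b + 1)), (Hg b (a + b + 1)) in Hab by lia.
    destruct (root_path_spec (R (k + (a + b + 1)))) as [N _].
    refine (proj1 (NoDup_nth _ r) N a b _ _ Hab); rewrite Hlen; lia.
  - intro; apply HV.
  - intro n. rewrite (Hg n (S n)), (Hg (S n) (S n)) by lia.
    destruct (root_path_spec (R (k + S n))) as [_ [C _]]. apply chain_nth; auto.
    rewrite Hlen. lia.
  - rewrite (Hg 0 1) by lia. destruct (root_path_spec (R (k + 1))) as [_ [_ [Hh _]]].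
    destruct (root_path (R (k + 1))); inversion Hh; auto.
  - intro j. destruct (root_path_last (R (k + j))) as [l Hl].
    assert (Hl' : length l = length L - 1 + j)
      by (pose proof (Hlen j) as H; rewrite Hl, length_app in H; simpl in H; lia).
    rewrite (Hg _ j), Hl, <- Hl' by lia. apply nth_middle.
Qed.

End RayTail.

Variable fam : (U -> Prop) -> Prop.
Hypothesis Hc : is_connectoid fam.
Hypothesis Hwn1 : forall C, connected fam C ->
  forall u v, C u -> C v -> V u -> V v -> ~ le u v -> ~ le v u ->
    exists w, C w /\ le w u /\ le w v.
Hypothesis Hwn2 : forall u v, V u -> V v -> le u v ->
  exists C, connected fam C /\ C u /\ C v /\ forall x, C x -> ~ (le x u /\ x <> u).

(* Otherwise condition (1) of normality yields a point of [C] strictly below [u]. *)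
Lemma connected_above C u v : connected fam C -> C v -> le u v ->
  (forall x, C x -> ~ (le x u /\ x <> u)) -> forall k, C k -> le u k.
Proof.
  intros HC Cv Huv Hav k Ck.
  assert (Hw : forall w, C w -> le w v -> le u w).
  { intros w Cw Hwv. destruct (tle_down_total Huv Hwv) as [H|H]; auto.
    destruct (classic (w = u)) as [<-|Hne]; [apply tle_refl|]. exfalso; apply (Hav w Cw); auto. }
  destruct (classic (le v k)) as [H1|H1]; [eapply tle_trans; eauto|].
  destruct (classic (le k v)) as [H2|H2]; [auto|].
  destruct (Hwn1 HC Ck Cv (HV k) (HV v) H2 H1) as [w [Cw [Hwk Hwv]]].
  eapply tle_trans; [exact (Hw w Cw Hwv)|exact Hwk].
Qed.

Lemma up_closure_connected t : connected fam (fun x => le t x).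
Proof.
  intros x y Hx Hy.
  destruct (Hwn2 (HV t) (HV x) Hx) as [C1 [HC1 [C1t [C1x Hav1]]]].
  destruct (Hwn2 (HV t) (HV y) Hy) as [C2 [HC2 [C2t [C2y Hav2]]]].
  destruct (HC1 x t C1x C1t) as [F1 [HF1 [SF1 [F1x F1t]]]].
  destruct (HC2 t y C2t C2y) as [F2 [HF2 [SF2 [F2t F2y]]]].
  apply (fam_join Hc (F := F1) (F' := F2) (p := t)); auto; intros z Hz;
    [apply (connected_above HC1 C1x Hx Hav1)|apply (connected_above HC2 C2y Hy Hav2)]; auto.
Qed.

Definition eventually_above (N : U -> Prop) t := finite_set (fun x => N x /\ ~ le t x).

Lemma eventually_above_root N : eventually_above N r.
Proof. exists []. intros x [_ H]. apply H, tle_root. Qed.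

Lemma eventually_above_total N a b : ~ finite_set N ->
  eventually_above N a -> eventually_above N b -> le a b \/ le b a.
Proof.
  intros HN Ha Hb. destruct (cofinite_meet HN Ha Hb) as [x [_ [Hax Hbx]]].
  exact (tle_down_total Hax Hbx).
Qed.

Lemma tail_eventually_above N t c K : is_tail fam N (fun x => le x t) K -> child t c ->
  (exists a, K a /\ le c a) -> eventually_above N c.
Proof.
  intros [[HKc [HKs _]] HKf] Htc [a [Ka Hca]].
  assert (Sub : forall k, K k -> le c k).
  { apply (connected_above HKc Ka Hca). intros x Kx [Hxc Hxne].
    apply (proj2 (HKs x Kx)). exact (child_below Htc Hxc Hxne). }
  eapply finite_set_sub; [|exact HKf].
  intros x [Nx Hx]. split; [auto|intro Kx; apply Hx, Sub; auto].
Qed.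

Lemma eventually_above_child N t : necklace fam N -> eventually_above N t ->
  exists c, child t c /\ eventually_above N c.
Proof.
  intros HN Ht.
  destruct (necklace_tail Hc HN (tle_down_finite t)) as [K HK].
  destruct (cofinite_meet (necklace_infinite HN) (proj2 HK) Ht) as [a [Na [Ka Hta]]].
  assert (Hat : ~ le a t) by (apply (proj2 (proj1 (proj2 (proj1 HK)) a Ka))).
  assert (Hne : t <> a) by (intros ->; apply Hat, tle_refl).
  destruct (child_above_tle Hta Hne) as [c [Htc Hca]].
  exists c. split; [exact Htc|]. apply (tail_eventually_above HK Htc). eauto.
Qed.

Fixpoint necklace_ray (N : U -> Prop) (n : nat) : U :=
  match n with
  | 0 => r
  | S n => epsilon (inhabits r) (fun c => child (necklace_ray N n) c /\ eventually_above N c)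
  end.

Lemma necklace_ray_spec N : necklace fam N -> forall n,
  eventually_above N (necklace_ray N n) /\ child (necklace_ray N n) (necklace_ray N (S n)).
Proof.
  intros HN.
  assert (Hstep : forall n, eventually_above N (necklace_ray N n) ->
    child (necklace_ray N n) (necklace_ray N (S n)) /\ eventually_above N (necklace_ray N (S n))).
  { intros n Hn. apply (epsilon_spec (inhabits r) (fun c => child (necklace_ray N n) c /\ _)).
    apply eventually_above_child; auto. }
  assert (H : forall n, eventually_above N (necklace_ray N n)).
  { induction n as [|n IH]; [apply eventually_above_root|apply Hstep, IH]. }
  intro n. split; [apply H|apply Hstep, H].
Qed.

Lemma necklace_ray_rooted N : necklace fam N -> rooted_ray (necklace_ray N).
Proof. intro HN. apply rooted_ray_of_children; [reflexivity|apply (necklace_ray_spec HN)]. Qed.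

Lemma necklace_ray_unique N g : necklace fam N -> rooted_ray g ->
  (forall n, eventually_above N (g n)) -> forall n, necklace_ray N n = g n.
Proof.
  intros HN Hg HgN. apply (rooted_ray_eq_of_common_upper (necklace_ray_rooted HN) Hg).
  intros n _.
  destruct (eventually_above_total (necklace_infinite HN)
              (proj1 (necklace_ray_spec HN (S n))) (HgN (S n))) as [H|H].
  - exists (g (S n)). split; [exact H|apply tle_refl].
  - exists (necklace_ray N (S n)). split; [apply tle_refl|exact H].
Qed.

Lemma necklace_equiv_ray_eq N N' : necklace fam N -> necklace fam N' -> necklace_equiv fam N N' ->
  forall n, necklace_ray N n = necklace_ray N' n.
Proof.
  intros HN HN' Heq.
  apply (rooted_ray_eq_of_common_upper (necklace_ray_rooted HN) (necklace_ray_rooted HN')).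
  intros n Hn. set (t := necklace_ray N n).
  set (c := necklace_ray N (S n)). set (c' := necklace_ray N' (S n)).
  assert (Cc : child t c) by apply (necklace_ray_spec HN).
  assert (Cc' : child t c') by (unfold t; rewrite Hn; apply (necklace_ray_spec HN')).
  destruct (necklace_tail Hc HN (tle_down_finite t)) as [K HK].
  destruct (necklace_tail Hc HN' (tle_down_finite t)) as [K' HK'].
  destruct (Heq _ (tle_down_finite t) K K' HK HK') as [D [[HDc [HDs _]] [SK SK']]].
  destruct (cofinite_meet (necklace_infinite HN) (proj2 HK) (proj1 (necklace_ray_spec HN (S n))))
    as [a [_ [Ka Hca]]].
  destruct (cofinite_meet (necklace_infinite HN') (proj2 HK') (proj1 (necklace_ray_spec HN' (S n))))
    as [a' [_ [Ka' Hca']]].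
  destruct (classic (le a a')) as [Haa'|Haa']; [exists a'; split; eauto using tle_trans|].
  destruct (classic (le a' a)) as [Ha'a|Ha'a]; [exists a; split; eauto using tle_trans|].
  destruct (Hwn1 HDc (SK a Ka) (SK' a' Ka') (HV a) (HV a') Haa' Ha'a) as [w [Dw [Hwa Hwa']]].
  exists w. split.
  - exact (child_tle_of_not_tle_parent Cc Hca Hwa (HDs w Dw)).
  - exact (child_tle_of_not_tle_parent Cc' Hca' Hwa' (HDs w Dw)).
Qed.

Lemma ray_equiv_necklace_ray_eq N N' : necklace fam N -> necklace fam N' ->
  ray_equiv V E (necklace_ray N) (necklace_ray N') ->
  forall n, necklace_ray N n = necklace_ray N' n.
Proof.
  intros HN HN' Hre.
  pose proof (necklace_ray_rooted HN) as R1. pose proof (necklace_ray_rooted HN') as R2.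
  apply (rooted_ray_eq_of_common_upper R1 R2). intros n Hn. set (t := necklace_ray N n).
  assert (Cc : child t (necklace_ray N (S n))) by apply (necklace_ray_spec HN).
  destruct (Hre _ (tle_down_finite t)) as [i [j [Hi [Hj [l [[HF [_ HCh]] [Hh Hlast]]]]]]].
  assert (Hin : S n <= i).
  { destruct (le_lt_dec (S n) i) as [H|H]; auto. exfalso.
    apply (Hi i (Nat.le_refl i)). apply (rooted_ray_mono R1). lia. }
  assert (Hjn : S n <= j).
  { destruct (le_lt_dec (S n) j) as [H|H]; auto. exfalso.
    apply (Hj j (Nat.le_refl j)). unfold t. rewrite Hn. apply (rooted_ray_mono R2). lia. }
  exists (necklace_ray N' j). split; [|apply (rooted_ray_mono R2); auto].
  destruct l as [|h l]; [discriminate|]. injection Hh as ->.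
  apply hd_error_rev_Some in Hlast as [l' Hl'].
  assert (Hend : In (necklace_ray N' j) (necklace_ray N i :: l))
    by (rewrite Hl'; apply in_or_app; simpl; auto).
  assert (Hci : le (necklace_ray N (S n)) (necklace_ray N i)) by (apply (rooted_ray_mono R1); auto).
  destruct Hend as [<-|Hend]; [exact Hci|].
  refine (chain_above_child Cc HCh Hci _ Hend).
  intros x Hx. rewrite Forall_forall in HF. apply (HF x Hx).
Qed.

Lemma necklace_ray_eq_equiv N N' : necklace fam N -> necklace fam N' ->
  (forall n, necklace_ray N n = necklace_ray N' n) -> necklace_equiv fam N N'.
Proof.
  intros HN HN' Heq X HX K K' HK HK'.
  destruct (injective_eventually_avoids (proj1 (proj1 (necklace_ray_rooted HN)))
              (down_closure_finite HX)) as [n Hn].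
  set (t := necklace_ray N n).
  assert (Hup : forall x, X x -> ~ le t x) by (intros x Xx Htx; apply (Hn n (le_n n)); eauto).
  set (A := fun x => ~ X x).
  assert (At : A t) by (intro Xt; exact (Hup t Xt (tle_refl t))).
  assert (Hupc : forall a, le t a -> component_of fam A t a).
  { intros a Ha. exists (fun x => le t x). repeat split; auto using up_closure_connected, tle_refl.
    intros z Hz Xz. exact (Hup z Xz Hz). }
  exists (component_of fam A t). split; [exact (component_of_component Hc At)|].
  assert (Htail : forall M L, necklace fam M -> is_tail fam M X L -> eventually_above M t ->
    subset L (component_of fam A t)).
  { intros M L HM [[HLc [HLs _]] HLf] HMt.
    destruct (cofinite_meet (necklace_infinite HM) HLf HMt) as [a [_ [La Ha]]].
    apply (component_of_absorbs Hc (q := a)); auto.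
    intros z Lz. exact (proj2 (HLs z Lz)). }
  split.
  - apply (Htail N); auto. apply (necklace_ray_spec HN).
  - apply (Htail N'); auto. unfold t. rewrite Heq. apply (necklace_ray_spec HN').
Qed.

Hypothesis Hnt : forall f, ray V E f -> f 0 = r ->
  exists N, necklace fam N /\ exists n0, forall n, n0 <= n -> N (f n).

Lemma ray_equiv_some_necklace_ray R : ray V E R ->
  exists N, necklace fam N /\ ray_equiv V E R (necklace_ray N).
Proof.
  intro HR. destruct (ray_tail_of_rooted_ray HR) as [g [m [k [Hg Hsh]]]].
  destruct (Hnt (proj1 Hg) (proj2 Hg)) as [N [HN [n0 HNg]]].
  exists N. split; [exact HN|].
  assert (HgN : forall n, eventually_above N (g n)).
  { intros [|n]; [rewrite (proj2 Hg); apply eventually_above_root|].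
    destruct (necklace_tail Hc HN (tle_down_finite (g n))) as [K HK].
    destruct (injective_eventually_avoids (proj1 (proj1 Hg)) (proj2 HK)) as [i Hi].
    apply (tail_eventually_above HK (rooted_ray_child Hg n)).
    exists (g (i + n0 + S n)). split.
    - apply NNPP. intro Hk. apply (Hi (i + n0 + S n)); [lia|]. split; auto. apply HNg. lia.
    - apply (rooted_ray_mono Hg). lia. }
  apply (ray_equiv_of_common_tail (m := m) (k := k) HR (proj1 (necklace_ray_rooted HN))).
  intro j. rewrite (necklace_ray_unique HN Hg HgN). apply Hsh.
Qed.

Lemma necklace_ray_ends_bijection :
  (forall N, necklace fam N -> ray V E (necklace_ray N)) /\
  (forall N N', necklace fam N -> necklace fam N' ->
     (necklace_equiv fam N N' <-> ray_equiv V E (necklace_ray N) (necklace_ray N'))) /\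
  (forall R, ray V E R -> exists N, necklace fam N /\ ray_equiv V E R (necklace_ray N)).
Proof.
  split; [|split].
  - intros N HN. apply (necklace_ray_rooted HN).
  - intros N N' HN HN'. split; intro H.
    + apply (ray_equiv_of_common_tail (m := 0) (k := 0));
        [apply (necklace_ray_rooted HN)|apply (necklace_ray_rooted HN')|].
      intro j. symmetry. apply (necklace_equiv_ray_eq HN HN' H).
    + apply (necklace_ray_eq_equiv HN HN'), (ray_equiv_necklace_ray_eq HN HN' H).
  - apply ray_equiv_some_necklace_ray.
Qed.

End Tree.

Theorem theorem1p2 (S : Type) (fam : (S -> Prop) -> Prop)
  (V : S -> Prop) (E : S -> S -> Prop) (r : S) :
  is_connectoid fam ->
  normal_spanning_tree fam V E r ->
  exists phi : (S -> Prop) -> (nat -> S),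
    (forall N, necklace fam N -> ray V E (phi N)) /\
    (forall N N', necklace fam N -> necklace fam N' ->
       (necklace_equiv fam N N' <-> ray_equiv V E (phi N) (phi N'))) /\
    (forall R, ray V E R -> exists N, necklace fam N /\ ray_equiv V E R (phi N)).
Proof.
  intros Hc [[[[[[_ [Hsym Hirr]] [Hconn Hnocyc]] _] [Hwn1 Hwn2]] Hnt] HV].
  exists (necklace_ray r HV Hconn).
  exact (necklace_ray_ends_bijection HV Hsym Hirr Hconn Hnocyc Hc Hwn1 Hwn2 Hnt).
Qed.
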